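(* Every partial Steiner triple system of order $n$ has a cyclically $\ell$-good sequencing for each positive integer $\ell \leq 0.0908\, n^{1/2}$.
   Context: A partial Steiner triple system of order $n$ is a pair $(X,\mathcal{B})$ where $X$ is an $n$-set of vertices ($n\ge 3$) and $\mathcal{B}$ is a collection of $3$-subsets of $X$ (blocks) such that each $2$-subset of $X$ is contained in at most one block. An independent set is a subset $Y\subseteq X$ containing no block. Let $\mathbb{Z}_n=\{0,\ldots,n-1\}$ be the cyclic group of order $n$. A sequencing is a bijection $\varphi:\mathbb{Z}_n\to X$. A set $S\subseteq X$ is cyclically consecutive if $S=\{\varphi(i),\varphi(i+1),\ldots,\varphi(i+|S|-1)\}$ for some $i\in\mathbb{Z}_n$ (addition in $\mathbb{Z}_n$). For a positive integer $\ell$, a sequencing is cyclically $\ell$-good if every set of $\ell$ cyclically consecutive vertices is an independent set. *)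

From Stdlib Require Import Reals.
From mathcomp Require Import all_boot.
Set Implicit Arguments. Unset Strict Implicit. Unset Printing Implicit Defensive.

Definition is_PSTS (T : finType) (B : {set {set T}}) : Prop :=
  (forall b, b \in B -> #|b| = 3) /\
  (forall x y : T, x != y -> #|[set b in B | (x \in b) && (y \in b)]| <= 1).

Definition independent (T : finType) (B : {set {set T}}) (Y : {set T}) : Prop :=
  forall b, b \in B -> ~~ (b \subset Y).

(* The set {phi(i), phi(i+1), ..., phi(i+l-1)}, indices taken in Z_n
   (i.e. modulo n; the default value i of insubd is never used since
   (i+k) %% n < n whenever 'I_n is inhabited). *)
Definition cyc_window (n : nat) (T : finType) (phi : 'I_n -> T) (i : 'I_n) (l : nat)
  : {set T} :=
  [set phi (insubd i ((i + k) %% n)) | k : 'I_l].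

Definition cyc_good (n : nat) (T : finType) (B : {set {set T}}) (phi : 'I_n -> T)
  (l : nat) : Prop :=
  forall i : 'I_n, independent B (cyc_window phi i l).

From Stdlib Require Import Reals Lra.
From mathcomp Require Import all_boot all_fingroup.
From mathcomp Require Import zify.
Set Implicit Arguments. Unset Strict Implicit. Unset Printing Implicit Defensive.

(* Choose the sequencing as a uniformly random bijection Z_n -> X. It is cyclically l-good
   unless some bad event occurs: the three vertices of a block land on three positions of
   one window of length l. Call two bad events compatible when they treat every shared
   position and every shared vertex alike. Post-composing with a permutation of X that maps
   the vertices of an event onto any other injective triple shows that, among bijections
   avoiding a family of events compatible with it, an event has density at most
   1/(n(n-1)(n-2)). Since two vertices determine a block, an event clashes with at most
   6 n^2 (2l-1)^2 others. The counting form of the lopsided local lemma therefore yields a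
   good bijection as soon as 24 n^2 (2l-1)^2 <= n(n-1)(n-2), which l <= 0.0908 sqrt n ensures. *)

Lemma leq_card_bigcup (I U : finType) (S : {set I}) (F : I -> {set U}) :
  #|\bigcup_(i in S) F i| <= \sum_(i in S) #|F i|.
Proof.
elim/big_rec2: _ => [|i x y _ IH]; first by rewrite cards0.
by apply: leq_trans (leq_card_setU _ _) _; rewrite leq_add2l.
Qed.

Lemma lll_step_arith (K d k x x2 g g2 s : nat) :
  x <= x2 -> K * x2 <= g2 -> g2 <= g + s -> K * s <= k * (2 * g2) -> k <= d -> 4 * d <= K ->
  K * x <= 2 * g.
Proof.
move=> le_x le_Kx2 le_g2 le_Ks le_kd le_dK.
have [-> // | K_gt0] := posnP K; rewrite -(leq_pmul2l K_gt0).
have : K * (K * x) <= K * g2 by rewrite leq_mul2l (leq_trans _ le_Kx2) ?leq_mul2l ?le_x ?orbT.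
have : K * g2 <= K * g + K * s by rewrite -mulnDr leq_mul2l le_g2 orbT.
have : k * (2 * g2) <= d * (2 * g2) by rewrite leq_mul2r le_kd orbT.
have : 4 * d * g2 <= K * g2 by rewrite leq_mul2r le_dK orbT.
lia.
Qed.

Section CountingLLL.
Variables (F E : finType) (Om : {set F}) (A : E -> {set F}) (dep : rel E).

Definition avoiding (S : {set E}) := Om :&: \bigcap_(b in S) ~: A b.

Lemma in_avoiding (S : {set E}) f :
  (f \in avoiding S) = (f \in Om) && [forall b in S, f \notin A b].
Proof.
rewrite inE; congr (_ && _).
by apply/bigcapP/forall_inP => H b /H; rewrite ?inE.
Qed.

Lemma avoidingS (S1 S2 : {set E}) : S1 \subset S2 -> avoiding S2 \subset avoiding S1.
Proof.
move=> sS12; apply/subsetP => f; rewrite !in_avoiding => /andP[-> /forall_inP fS2].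
by apply/forall_inP => b /(subsetP sS12) /fS2.
Qed.

Lemma avoidingU1 a (S : {set E}) : avoiding (a |: S) = avoiding S :\: A a.
Proof.
apply/setP => f; rewrite in_setD !in_avoiding andbCA; congr (_ && _).
apply/forall_inP/andP => [fS | [fa /forall_inP fS] b].
  by split; [apply: fS; rewrite setU11 | apply/forall_inP => b bS; apply: fS; rewrite setU1r].
by case/setU1P => [-> // | /fS].
Qed.

Lemma avoiding_cover (S1 S2 : {set E}) : S1 \subset S2 ->
  avoiding S1 \subset avoiding S2 :|: \bigcup_(b in S2 :\: S1) (A b :&: avoiding S1).
Proof.
move=> sS12; apply/subsetP => f fS1; rewrite inE.
have [// | fS2] := boolP (f \in avoiding S2).
move: (fS1) fS2; rewrite !in_avoiding => /andP[-> /forall_inP fS1'] /=.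
rewrite negb_forall_in => /exists_inP[b bS2 /negPn fb].
apply/bigcupP; exists b; last by rewrite inE fb.
by rewrite inE bS2 andbT; apply: contraL fb => /fS1'.
Qed.

Variables (Ev : {set E}) (K d : nat).
Hypothesis lopsided : forall a (S : {set E}), a \in Ev -> S \subset Ev ->
  {in S, forall b, ~~ dep a b} -> K * #|A a :&: avoiding S| <= #|avoiding S|.
Hypothesis dep_degree : forall a, a \in Ev -> #|[set b in Ev | dep a b]| <= d.
Hypothesis degree_small : 4 * d <= K.

Lemma card_event_avoiding (S : {set E}) a : S \subset Ev -> a \in Ev -> a \notin S ->
  K * #|A a :&: avoiding S| <= 2 * #|avoiding S|.
Proof.
elim: {S}#|S|.+1 {-2}S (ltnSn #|S|) a => // m IH S leSm a sSEv aEv aS.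
set S2 := [set b in S | ~~ dep a b]; set S1 := S :\: S2.
have sS2S : S2 \subset S by apply/subsetP => b; rewrite inE => /andP[].
have sS2Ev := subset_trans sS2S sSEv.
have lop2 : K * #|A a :&: avoiding S2| <= #|avoiding S2|.
  by apply: lopsided aEv sS2Ev _ => b; rewrite inE => /andP[].
have le_x : #|A a :&: avoiding S| <= #|A a :&: avoiding S2|.
  by apply/subset_leq_card/setIS/avoidingS.
have cover : #|avoiding S2| <= #|avoiding S| + \sum_(b in S1) #|A b :&: avoiding S2|.
  apply: leq_trans (subset_leq_card (avoiding_cover sS2S)) _.
  by apply: leq_trans (leq_card_setU _ _) _; rewrite leq_add2l leq_card_bigcup.
have IH1 : K * (\sum_(b in S1) #|A b :&: avoiding S2|) <= #|S1| * (2 * #|avoiding S2|).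
  rewrite big_distrr -sum_nat_const /=; apply: leq_sum => b; rewrite inE => /andP[bS2 bS].
  apply: IH => //; last exact: subsetP sSEv _ bS.
  rewrite -ltnS (leq_trans _ leSm) // ltnS.
  by apply/proper_card/properP; split => //; exists b.
have degS1 : #|S1| <= d.
  apply: leq_trans (dep_degree aEv); apply/subset_leq_card/subsetP => b.
  by rewrite !inE andbC => /andP[bS]; rewrite bS negbK => ->; rewrite (subsetP sSEv).
exact: lll_step_arith le_x lop2 cover IH1 degS1 degree_small.
Qed.

Lemma avoiding_gt0 (S : {set E}) : 0 < #|Om| -> 2 < K -> S \subset Ev -> 0 < #|avoiding S|.
Proof.
move=> Om_gt0 K_gt2.
elim: {S}#|S|.+1 {-2}S (ltnSn #|S|) => // m IH S leSm sSEv.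
have [-> | [a aS]] := set_0Vmem S; first by rewrite /avoiding big_set0 setIT.
have sS'S : S :\ a \subset S by apply: subsetDl.
have sS'Ev := subset_trans sS'S sSEv.
have gt0 : 0 < #|avoiding (S :\ a)|.
  by apply: IH sS'Ev; rewrite -ltnS (leq_trans _ leSm) // ltnS (cardsD1 a S) aS.
have := card_event_avoiding sS'Ev (subsetP sSEv _ aS) (negbT (setD11 a S)).
have := subset_leq_card (subsetIr (A a) (avoiding (S :\ a))).
rewrite -[in avoiding S](setD1K aS) avoidingU1 cardsD setIC; nia.
Qed.

End CountingLLL.

Lemma perm_extend (T : finType) (xs ys : seq T) :
  uniq xs -> uniq ys -> size xs = size ys ->
  exists s : {perm T}, map s xs = ys /\ perm_on [set z in xs ++ ys] s.
Proof.
case: xs => [|x0 xs']; first by case: ys => // _ _ _; exists 1%g; rewrite perm_on1.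
move=> uxs uys size_xy; set xs := x0 :: xs' in uxs size_xy *.
set U := undup (xs ++ ys).
have completion zs : uniq zs -> {subset zs <= U} ->
    let e := zs ++ [seq z <- U | z \notin zs] in [/\ uniq e, e =i U & size e = size U].
  move=> uzs szsU e.
  have ue : uniq e.
    rewrite cat_uniq uzs filter_uniq ?undup_uniq //= andbT.
    by apply/hasPn => z; rewrite mem_filter => /andP[].
  have eU : e =i U by move=> z; rewrite mem_cat mem_filter; case: (boolP (z \in zs)) => // /szsU.
  by split=> //; apply/perm_size/uniq_perm; rewrite ?undup_uniq.
have [|uex exU size_ex] := completion xs uxs.
  by move=> z zx; rewrite mem_undup mem_cat zx.
have [|uey eyU size_ey] := completion ys uys.
  by move=> z zy; rewrite mem_undup mem_cat zy orbT.
set ex := _ ++ _ in uex exU size_ex; set ey := _ ++ _ in uey eyU size_ey.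
have AU : [set z in xs ++ ys] =i U by move=> z; rewrite inE mem_undup.
(* [f] matches [ex] with [ey] term by term; both list [U], and start with [xs] and [ys]. *)
pose f z := nth x0 ey (index z ex).
have lt_index z : z \in [set z in xs ++ ys] -> index z ex < size ey.
  by rewrite AU size_ey -size_ex index_mem exU.
have injf : {in [set z in xs ++ ys] &, injective f}.
  move=> z w zA wA /eqP; rewrite nth_uniq ?lt_index // => /eqP.
  by apply: (index_inj x0); rewrite exU -AU.
have sfA : [set f z | z in [set z in xs ++ ys]] \subset [set z in xs ++ ys].
  by apply/subsetP => _ /imsetP[z zA ->]; rewrite AU -eyU mem_nth ?lt_index.
exists (perm_in injf sfA); split; last exact: perm_in_on.
apply: (@eq_from_nth _ x0); rewrite size_map // => i lti.
rewrite (nth_map x0) // perm_inE; last by rewrite in_set mem_cat mem_nth.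
by rewrite /f /ex index_cat mem_nth // index_uniq // nth_cat -size_xy lti.
Qed.

Lemma perm_on_cat_fixed (T : finType) (s : {perm T}) (xs ys : seq T) :
  map s xs = ys -> perm_on [set z in xs ++ ys] s ->
  forall z, z \notin xs -> s z \notin xs -> s z = z.
Proof.
move=> sxs son z zx szx.
have [zS | zS] := boolP (z \in [set z in xs ++ ys]); last exact: out_perm son zS.
have := zS; rewrite -(perm_closed _ son) !in_set !mem_cat (negbTE szx) /= -sxs.
by case/mapP => w wx /perm_inj zw; move: zx; rewrite zw wx.
Qed.

Lemma imset_perm (I U : finType) (s : {perm I}) (F : I -> U) :
  [set F (s j) | j : I] = [set F j | j : I].
Proof.
apply/setP => y; apply/imsetP/imsetP => [[j _ ->] | [j _ ->]]; first by exists (s j).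
by exists (s^-1 j)%g; rewrite ?permKV.
Qed.

Lemma exists_ffun_enum (T : finType) (A : {set T}) k : #|A| = k ->
  exists X : {ffun 'I_k -> T}, injective X /\ [set X i | i : 'I_k] = A.
Proof.
move=> cardA; exists [ffun i => enum_val (cast_ord (esym cardA) i)]; split.
  by move=> i j; rewrite !ffunE => /enum_val_inj /cast_ord_inj.
apply/setP => x; apply/imsetP/idP => [[i _ ->] | xA]; first by rewrite ffunE enum_valP.
by exists (cast_ord cardA (enum_rank_in xA x)); rewrite // ffunE cast_ordK enum_rankK_in.
Qed.

Definition i1 : 'I_3 := @Ordinal 3 1 isT.
Definition i2 : 'I_3 := @Ordinal 3 2 isT.

Lemma ord3P (k : 'I_3) : [\/ k = ord0, k = i1 | k = i2].
Proof.
by case: k => [[|[|[|m]]] Hk] //; [constructor 1 | constructor 2 | constructor 3]; apply: val_inj.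
Qed.

Section Sequencings.
Variables (n : nat) (T : finType).

Definition sequencings := [set f : {ffun 'I_n -> T} | injectiveb f].
Definition agree (a : {set 'I_n * T}) :=
  [set f in sequencings | [forall pr in a, f pr.1 == pr.2]].
(* The lopsided dependency between bad events: [a] and [b] clash when together they send
   a position to two vertices or a vertex to two positions. *)
Definition clash (a b : {set 'I_n * T}) :=
  [exists pr in a, exists qr in b, (pr.1 == qr.1) != (pr.2 == qr.2)].

Definition placement := ({ffun 'I_3 -> 'I_n} * {ffun 'I_3 -> T})%type.
Definition graph (c : placement) := [set (c.1 k, c.2 k) | k : 'I_3].
Definition inj_triples := [set t : {ffun 'I_3 -> T} | injectiveb t].

Local Notation good := (avoiding sequencings agree).

Lemma in_agree_graph (c : placement) f :
  (f \in agree (graph c)) = (f \in sequencings) && [forall k, f (c.1 k) == c.2 k].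
Proof.
rewrite inE; congr (_ && _); apply/forall_inP/forallP => [fc k | fc _ /imsetP[k _ ->]].
  exact: (fc (c.1 k, c.2 k) (imset_f _ _)).
exact: fc.
Qed.

Lemma no_clash_graph (c : placement) b : ~~ clash (graph c) b ->
  forall k r y, (r, y) \in b -> (c.1 k == r) = (c.2 k == y).
Proof.
rewrite negb_exists_in => /forall_inP ncl k r y ryb.
have /ncl : (c.1 k, c.2 k) \in graph c by apply: imset_f.
by rewrite negb_exists_in => /forall_inP /(_ _ ryb) /negPn /eqP.
Qed.

Lemma good_switch (c : placement) (S : {set {set 'I_n * T}}) (s : {perm T}) f :
  {in S, forall b, ~~ clash (graph c) b} ->
  (forall z, z \notin codom c.2 -> s z \notin codom c.2 -> s z = z) ->
  f \in agree (graph c) :&: good S -> [ffun j => s (f j)] \in good S.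
Proof.
move=> ncl sfix; rewrite in_setI in_agree_graph in_avoiding.
case/andP=> /andP[fseq /forallP fc] /andP[_ /forall_inP fS].
have /injectiveP finj : injectiveb f by rewrite inE in fseq.
rewrite in_avoiding inE; apply/andP; split.
  by apply/injectiveP => i j; rewrite !ffunE => /perm_inj /finj.
apply/forall_inP => b bS; apply/negP; rewrite inE => /andP[_ /forall_inP sfb].
case/negP: (fS b bS); rewrite inE fseq /=; apply/forall_inP => -[r y] ryb /=.
have /eqP := sfb _ ryb; rewrite ffunE /= => sfr.
have same k := no_clash_graph (ncl b bS) k ryb.
(* If [f r] or [s (f r)] is a vertex of [c], compatibility with [c] forces [f r = y];
   otherwise [s] fixes [f r]. *)
have [/codomP[k frk] | fr_out] := boolP (f r \in codom c.2).
  suff /eqP <- : c.2 k == y by rewrite frk.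
  by rewrite -same; apply/eqP/finj; rewrite (eqP (fc k)) frk.
have [/codomP[k sfrk] | sfr_out] := boolP (s (f r) \in codom c.2).
  suff /eqP <- : c.1 k == r by rewrite (eqP (fc k)) -sfr sfrk.
  by rewrite same -sfr sfrk.
by rewrite -sfr sfix.
Qed.

Lemma card_agree_good (c : placement) (S : {set {set 'I_n * T}}) :
  injective c.2 -> {in S, forall b, ~~ clash (graph c) b} ->
  #|inj_triples| * #|agree (graph c) :&: good S| <= #|good S|.
Proof.
move=> c2inj ncl.
pose key (f : {ffun 'I_n -> T}) := [ffun k => f (c.1 k)].
have fibres : \sum_t #|[set f in good S | key f == t]| = #|good S|.
  rewrite -sum1_card (partition_big key predT) //=; apply: eq_bigr => t _.
  by rewrite -sum1_card; apply: eq_bigl => f; rewrite inE.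
rewrite -fibres -sum_nat_const [X in _ <= X](bigID (mem inj_triples)) /=.
apply: leq_trans (leq_addr _ _); apply: leq_sum => t; rewrite inE => /injectiveP tinj.
have [s [sXt son]] : exists s : {perm T},
    map s (codom c.2) = codom t /\ perm_on [set z in codom c.2 ++ codom t] s.
  by apply: perm_extend; rewrite ?size_codom //; apply/injectiveP.
have sc2 k : s (c.2 k) = t k.
  by move: sXt; rewrite !codomE -map_comp => /eq_in_map /(_ k (mem_enum _ k)).
pose switch (f : {ffun 'I_n -> T}) := [ffun j => s (f j)].
have switch_inj : injective switch.
  move=> f1 f2 /ffunP eq12; apply/ffunP => j.
  by apply: (@perm_inj _ s); have := eq12 j; rewrite !ffunE.
rewrite -(card_imset _ switch_inj); apply/subset_leq_card/subsetP => _ /imsetP[f fAG ->].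
rewrite inE (good_switch ncl (perm_on_cat_fixed sXt son) fAG) /=.
move: fAG; rewrite in_setI in_agree_graph => /andP[/andP[_ /forallP fc] _].
by apply/eqP/ffunP => k; rewrite !ffunE (eqP (fc k)) sc2.
Qed.

Variables (B : {set {set T}}) (l : nat).
Hypotheses (PSTS : is_PSTS B) (card_T : #|T| = n) (le_ln : l.-1 <= n).

Definition shift (i : 'I_n) (k : nat) : 'I_n := insubd i ((i + k) %% n).
Definition window (i : 'I_n) := [set shift i k | k : 'I_l].
(* [n - l.-1 + j] stands for [j - (l - 1)] modulo [n], which needs [l.-1 <= n]. *)
Definition near (p : 'I_n) := [set shift p (n - l.-1 + j) | j : 'I_(l.*2.-1)].

Lemma val_shift i k : val (shift i k) = (i + k) %% n.
Proof. by rewrite val_insubd ltn_pmod // (leq_ltn_trans (leq0n i) (ltn_ord i)). Qed.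

Lemma near_window i p q : p \in window i -> q \in window i -> q \in near p.
Proof.
move=> /imsetP[k1 _ ->] /imsetP[k2 _ ->].
have lk1 := ltn_ord k1; have lk2 := ltn_ord k2.
have hj : k2 + l.-1 - k1 < l.*2.-1 by lia.
apply/imsetP; exists (Ordinal hj) => //; apply: val_inj; rewrite /= !val_shift modnDml.
have -> : i + k1 + (n - l.-1 + (k2 + l.-1 - k1)) = (i + k2) + n by lia.
by rewrite modnDr.
Qed.

Definition bad (c : placement) := [&& injectiveb c.1, injectiveb c.2,
  [set c.2 k | k : 'I_3] \in B & [exists i, [forall k, c.1 k \in window i]]].
Definition bad_events := [set graph c | c in [pred c | bad c]].

Lemma bad_rotate c k : bad c -> exists c' : placement,
  [/\ bad c', graph c' = graph c, c'.1 ord0 = c.1 k & c'.2 ord0 = c.2 k].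
Proof.
case: c => P X /and4P[/injectiveP Pinj /injectiveP Xinj XB /existsP[i /forallP Pi]].
pose r := tperm ord0 k.
exists ([ffun j => P (r j)], [ffun j => X (r j)]); split => /=.
- apply/and4P; split.
  + by apply/injectiveP => j1 j2; rewrite !ffunE => /Pinj /perm_inj.
  + by apply/injectiveP => j1 j2; rewrite !ffunE => /Xinj /perm_inj.
  + by rewrite (eq_imset _ (ffunE _)) /= (imset_perm r X).
  + by apply/existsP; exists i; apply/forallP => j; rewrite ffunE.
- rewrite /graph /= (eq_imset _ (fun j => congr2 pair (ffunE _ j) (ffunE _ j))) /=.
  exact: (imset_perm r (fun j => (P j, X j))).
- by rewrite ffunE tpermL.
- by rewrite ffunE tpermL.
Qed.

Lemma placement_eq (c1 c2 : placement) :
  c1.1 ord0 = c2.1 ord0 -> c1.1 i1 = c2.1 i1 -> c1.1 i2 = c2.1 i2 ->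
  c1.2 ord0 = c2.2 ord0 -> c1.2 i1 = c2.2 i1 -> c1.2 i2 = c2.2 i2 -> c1 = c2.
Proof.
case: c1 c2 => P1 X1 [P2 X2] /= p0 p1 p2 x0 x1 x2.
by congr pair; apply/ffunP => k; case: (ord3P k) => ->.
Qed.

Lemma bad_third_vertex (c1 c2 : placement) : bad c1 -> bad c2 ->
  c1.2 ord0 = c2.2 ord0 -> c1.2 i1 = c2.2 i1 -> c1.2 i2 = c2.2 i2.
Proof.
case: c1 c2 => P1 X1 [P2 X2] /=; have [_ PSTS_pair] := PSTS.
move=> /and4P[_ /injectiveP X1inj X1B _] /and4P[_ _ X2B _] x0 x1.
have x01 : X1 ord0 != X1 i1 by apply/eqP => /X1inj.
have same_block : [set X1 k | k : 'I_3] = [set X2 k | k : 'I_3].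
  apply: (card_le1_eqP (PSTS_pair _ _ x01)); rewrite !inE ?X1B ?X2B /= ?imset_f //.
  by rewrite x0 x1 !imset_f.
have : X1 i2 \in [set X2 k | k : 'I_3] by rewrite -same_block imset_f.
by case/imsetP => k _; case: (ord3P k) => -> //; rewrite -?x0 -?x1 => /X1inj.
Qed.

Lemma card_events_le (Sb : {set {set 'I_n * T}}) (R : pred placement) (U : finType)
    (h : placement -> U) (W : {set U}) :
  (forall b, b \in Sb -> exists c, [/\ bad c, R c & graph c = b]) ->
  {in [pred c | bad c && R c] &, injective h} ->
  (forall c, bad c -> R c -> h c \in W) ->
  #|Sb| <= #|W|.
Proof.
move=> Sb_graph hinj hW.
pose code b := [pick c | [&& bad c, R c & graph c == b]].
have codeP b : b \in Sb -> {c | [&& bad c, R c & graph c == b] & code b = Some c}.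
  rewrite /code => bSb; case: pickP => [c cb | none]; first by exists c.
  by exfalso; have [c [cbad cR cb]] := Sb_graph b bSb; move: (none c); rewrite cbad cR cb eqxx.
have code_inj : {in Sb &, injective (fun b => omap h (code b))}.
  move=> b1 b2 /codeP[c1 /and3P[c1bad c1R /eqP <-] ->] /codeP[c2 /and3P[c2bad c2R /eqP <-] ->].
  by case=> /hinj -> //; rewrite inE ?c1bad ?c2bad.
rewrite -(card_in_imset code_inj) -(card_imset W Some_inj).
apply/subset_leq_card/subsetP => _ /imsetP[b bSb ->].
have [c /and3P[cbad cR _] ->] := codeP b bSb.
by rewrite /= imset_f ?hW.
Qed.

Lemma bad_near (c : placement) : bad c ->
  c.1 i1 \in near (c.1 ord0) /\ c.1 i2 \in near (c.1 ord0).
Proof. by case/and4P => _ _ _ /existsP[i /forallP Pi]; split; apply: near_window. Qed.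

Lemma card_events_at_vertex x :
  #|[set b in bad_events | [exists p, (p, x) \in b]]| <= n * n * (l.*2.-1 * l.*2.-1).
Proof.
(* The second vertex fixes the block, and the other two positions are near the first. *)
set m := l.*2.-1.
pose code (w : T * 'I_n * 'I_m * 'I_m) : T * 'I_n * 'I_n * 'I_n :=
  let: (y, p, j1, j2) := w in (y, p, shift p (n - l.-1 + j1), shift p (n - l.-1 + j2)).
apply: leq_trans (@card_events_le _ (fun c => c.2 ord0 == x) _
   (fun c => (c.2 i1, c.1 ord0, c.1 i1, c.1 i2)) [set code w | w in setT] _ _ _) _.
- move=> b; rewrite inE => /andP[/imsetP[c cbad ->] /existsP[p /imsetP[k _ [_ ->]]]].
  by have [c' [c'bad gc' _ c'k]] := bad_rotate k cbad; exists c'; rewrite c'k eqxx.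
- move=> c1 c2 /andP[c1bad /eqP x1] /andP[c2bad /eqP x2] [e1 e2 e3 e4].
  have x0 : c1.2 ord0 = c2.2 ord0 by rewrite x1 x2.
  by apply: placement_eq => //; apply: bad_third_vertex.
- move=> c cbad _; case: (bad_near cbad) => /imsetP[j1 _ ->] /imsetP[j2 _ ->].
  by apply/imsetP; exists (c.2 i1, c.1 ord0, j1, j2).
- apply: leq_trans (leq_imset_card _ _) _.
  by rewrite cardsT !card_prod !card_ord card_T mulnA.
Qed.

Lemma card_events_at_position p :
  #|[set b in bad_events | [exists x, (p, x) \in b]]| <= n * n * (l.*2.-1 * l.*2.-1).
Proof.
set m := l.*2.-1.
pose code (w : T * T * 'I_m * 'I_m) : T * T * 'I_n * 'I_n :=
  let: (x, y, j1, j2) := w in (x, y, shift p (n - l.-1 + j1), shift p (n - l.-1 + j2)).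
apply: leq_trans (@card_events_le _ (fun c => c.1 ord0 == p) _
   (fun c => (c.2 ord0, c.2 i1, c.1 i1, c.1 i2)) [set code w | w in setT] _ _ _) _.
- move=> b; rewrite inE => /andP[/imsetP[c cbad ->] /existsP[x /imsetP[k _ [-> _]]]].
  by have [c' [c'bad gc' c'k _]] := bad_rotate k cbad; exists c'; rewrite c'k eqxx.
- move=> c1 c2 /andP[c1bad /eqP p1] /andP[c2bad /eqP p2] [e1 e2 e3 e4].
  have p0 : c1.1 ord0 = c2.1 ord0 by rewrite p1 p2.
  by apply: placement_eq => //; apply: bad_third_vertex.
- move=> c cbad /eqP cp; case: (bad_near cbad); rewrite cp => /imsetP[j1 _ ->] /imsetP[j2 _ ->].
  by apply/imsetP; exists (c.2 ord0, c.2 i1, j1, j2).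
- apply: leq_trans (leq_imset_card _ _) _.
  by rewrite cardsT !card_prod !card_ord card_T mulnA.
Qed.

Lemma clash_degree a : a \in bad_events ->
  #|[set b in bad_events | clash a b]| <= 6 * (n * n * (l.*2.-1 * l.*2.-1)).
Proof.
case/imsetP => c _ ->; set N := n * n * _.
pose at_position p := [set b in bad_events | [exists x, (p, x) \in b]].
pose at_vertex x := [set b in bad_events | [exists p, (p, x) \in b]].
have cover : [set b in bad_events | clash (graph c) b] \subset
    \bigcup_(k in [set: 'I_3]) (at_position (c.1 k) :|: at_vertex (c.2 k)).
  apply/subsetP => b; rewrite inE => /andP[bE /exists_inP[_ /imsetP[k _ ->]]].
  case/exists_inP => -[p x] pxb /= ne; apply/bigcupP; exists k; rewrite ?inE ?bE //=.
  have [-> | ne1] := eqVneq (c.1 k) p; first by apply/orP; left; apply/existsP; exists x.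
  move: ne; rewrite (negbTE ne1); have [-> _ | //] := eqVneq (c.2 k) x.
  by apply/orP; right; apply/existsP; exists p.
apply: leq_trans (subset_leq_card cover) _; apply: leq_trans (leq_card_bigcup _ _) _.
apply: leq_trans (_ : \sum_(k in [set: 'I_3]) (N + N) <= _).
  apply: leq_sum => k _; apply: leq_trans (leq_card_setU _ _) _.
  exact: leq_add (card_events_at_position _) (card_events_at_vertex _).
by rewrite sum_nat_const cardsT card_ord; lia.
Qed.

Lemma card_inj_triples : #|inj_triples| = n * (n.-1 * n.-2).
Proof. by rewrite card_inj_ffuns card_ord card_T !ffactnS ffactn0 muln1. Qed.

Lemma exists_good_sequencing : 3 <= n ->
  4 * (6 * (n * n * (l.*2.-1 * l.*2.-1))) <= n * (n.-1 * n.-2) ->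
  exists f, f \in good bad_events.
Proof.
rewrite -card_inj_triples => n_ge3 lll.
have lopsided a (S : {set {set 'I_n * T}}) : a \in bad_events -> S \subset bad_events ->
    {in S, forall b, ~~ clash a b} -> #|inj_triples| * #|agree a :&: good S| <= #|good S|.
  by case/imsetP => c /and4P[_ /injectiveP c2inj _ _] -> _; apply: card_agree_good.
have seq_gt0 : 0 < #|sequencings|.
  have [X [Xinj _]] := exists_ffun_enum (etrans (cardsT T) card_T).
  by apply/card_gt0P; exists X; rewrite inE; apply/injectiveP.
have K_gt2 : 2 < #|inj_triples|.
  have [n1 n2] : 2 <= n.-1 /\ 1 <= n.-2 by lia.
  by rewrite card_inj_triples (leq_trans _ (leq_mul n_ge3 (leq_mul n1 n2))).
have /card_gt0P[f fgood] := avoiding_gt0 lopsided clash_degree lll seq_gt0 K_gt2 (subxx _).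
by exists f.
Qed.

Lemma good_cyc_good f : f \in good bad_events -> cyc_good B (fun i => f i) l.
Proof.
rewrite in_avoiding => /andP[fseq /forall_inP favoid].
have /injectiveP finj : injectiveb f by rewrite inE in fseq.
have [g fK gK] : bijective f by apply: inj_card_bij; rewrite // card_ord card_T.
move=> i b bB; apply/negP => b_win.
have [X [Xinj XB]] := exists_ffun_enum (PSTS.1 b bB).
pose P : {ffun 'I_3 -> 'I_n} := [ffun k => g (X k)].
have Pbad : bad (P, X).
  apply/and4P; split => /=.
  - by apply/injectiveP => k1 k2; rewrite !ffunE => /(can_inj gK) /Xinj.
  - exact/injectiveP.
  - by rewrite XB.
  - apply/existsP; exists i; apply/forallP => k; rewrite ffunE.
    have /(subsetP b_win)/imsetP[j _ ->] : X k \in b by rewrite -XB imset_f.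
    by rewrite fK; apply/imsetP; exists j.
have /negP[] := favoid _ (imset_f graph Pbad).
by rewrite in_agree_graph fseq; apply/forallP => k /=; rewrite ffunE gK.
Qed.

End Sequencings.

Lemma cyc_good_small (n : nat) (T : finType) (B : {set {set T}}) (phi : 'I_n -> T) l :
  is_PSTS B -> l <= 2 -> cyc_good B phi l.
Proof.
move=> [card3 _] l_le2 i b bB; apply/negP => /subset_leq_card.
by rewrite card3 // => /leq_trans/(_ (leq_imset_card _ _)); rewrite card_ord; lia.
Qed.

Lemma lll_condition (l n : nat) :
  100 * 100 * 100 * 100 * (l * l) <= 908 * 908 * n -> 3 <= l ->
  l.-1 <= n /\ 4 * (6 * (n * n * (l.*2.-1 * l.*2.-1))) <= n * (n.-1 * n.-2).
Proof.
(* [96 * 0.0908^2 < 0.8], and [l >= 3] forces [n >= 1092], so the [3 n^2] lost in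
   [n (n-1) (n-2)] is absorbed. *)
move=> ln l_ge3.
have l2_ge9 : 9 <= l * l := leq_mul l_ge3 l_ge3.
have n_large : 1092 <= n by move: ln l2_ge9; set x := l * l; lia.
split; first by nia.
have m_le : l.*2.-1 * l.*2.-1 <= 4 * (l * l) by nia.
have falling : n * (n * n) <= n * (n.-1 * n.-2) + 3 * (n * n).
  by case: n {ln n_large} (n_large) => [|[|[|k]]] //= _; nia.
have h1 := leq_mul (leqnn (96 * (n * n))) ln.
have h2 := leq_mul (leqnn (n * n)) m_le.
have h3 : 300 * (n * n) <= 2 * n * (n * n) by rewrite leq_mul2r; lia.
move: h1 h2 h3 falling; set y := n * n; set z := n * (n.-1 * n.-2).
set x := l * l; set m := l.*2.-1 * l.*2.-1; lia.
Qed.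

Lemma sqrt_bound_nat (l n : nat) :
  Rle (INR l) (Rmult (Rdiv (INR 908) (INR 10000)) (sqrt (INR n))) ->
  100 * 100 * 100 * 100 * (l * l) <= 908 * 908 * n.
Proof.
move=> le_l; apply/leP/INR_le.
rewrite -!multE !mult_INR !(INR_IZR_INZ 100) !(INR_IZR_INZ 908) /=.
rewrite (INR_IZR_INZ 908) (INR_IZR_INZ 10000) /= in le_l.
have l_ge0 := pos_INR l; have sqrt_ge0 := sqrt_pos (INR n).
have sqrtK : Rmult (sqrt (INR n)) (sqrt (INR n)) = INR n by apply/sqrt_sqrt/pos_INR.
have sq_le := Rmult_le_compat _ _ _ _ l_ge0 l_ge0 le_l le_l.
rewrite -sqrtK; lra.
Qed.

Theorem corollary3 (T : finType) (B : {set {set T}}) (n l : nat) :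
  #|T| = n -> 3 <= n -> is_PSTS B ->
  0 < l -> Rle (INR l) (Rmult (Rdiv (INR 908) (INR 10000)) (sqrt (INR n))) ->
  exists phi : 'I_n -> T, bijective phi /\ cyc_good B phi l.
Proof.
move=> card_T n_ge3 PSTS _ le_l.
have [l_le2 | l_ge3] := leqP l 2.
  have [X [Xinj _]] := exists_ffun_enum (etrans (cardsT T) card_T).
  exists X; split; last exact: cyc_good_small.
  by apply: inj_card_bij; rewrite // card_ord card_T.
have [le_ln lll] := lll_condition (sqrt_bound_nat le_l) l_ge3.
have [f fgood] := exists_good_sequencing PSTS card_T le_ln n_ge3 lll.
exists (fun i => f i); split; last exact: good_cyc_good.
apply: inj_card_bij; last by rewrite card_ord card_T.
by move: fgood; rewrite in_avoiding inE => /andP[/injectiveP].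
Qed.
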